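(* Let $\Lambda$, $\Lambda_1$ be rings and let $T$ be a one-variable covariant functor from left $\Lambda$-modules to $\Lambda_1$-modules, with first left satellite $S_1T$. (i) If $T$ is half exact and of type $L\Sigma^{*}$, then $S_1T$ is of type $L\Sigma^{*}$. (ii) If $T$ is right exact, $S_1T$ is of type $L\Sigma^{*}$, and $T$ commutes with direct limits of projective modules, then $T$ is of type $L\Sigma^{*}$.
   Context: Direct systems $\{A^{\alpha},\varphi^{\alpha}_{\beta}\}$ of left $\Lambda$-modules are indexed by directed sets, with direct limit $\varinjlim A^\alpha$ and canonical maps $\sigma^{\alpha}:A^{\alpha}\to\varinjlim A^{\gamma}$. For a covariant functor $F$, the system $\{F(A^\alpha),F(\varphi^\alpha_\beta)\}$ is a direct system and there is a canonical homomorphism $\widehat\sigma:\varinjlim F(A^\alpha)\to F(\varinjlim A^\alpha)$ with $\widehat\sigma\circ\sigma^\alpha_F=F(\sigma^\alpha)$, where $\sigma^\alpha_F:F(A^\alpha)\to\varinjlim F(A^\gamma)$ is the canonical map. $F$ is of type $L\Sigma^{*}$ (commutes with direct limits) if $\widehat\sigma$ is an isomorphism for every direct system; ''$T$ commutes with direct limits of projective modules'' means $\widehat\sigma$ is an isomorphism for every direct system in which all modules $A^\alpha$ are projective. $T$ is half exact if for every short exact sequence $0\to A'\to A\to A''\to 0$ the sequence $T(A')\to T(A)\to T(A'')$ is exact, and right exact if $T(A')\to T(A)\to T(A'')\to 0$ is exact. Left satellite: for a module $A$ choose a short exact sequence $0\to M\to P\to A\to 0$ with $P$ projective, and set $S_1T(A)=\operatorname{Ker}(T(M)\to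 T(P))$; for $g:A'\to A$, lifting $g$ to maps $P'\to P$, $M'\to M$ between chosen sequences, $S_1T(g)$ is the map $S_1T(A')\to S_1T(A)$ induced by $T(M')\to T(M)$, which is independent of the choices. This makes $S_1T$ a covariant functor. *)

From HB Require Import structures.
From mathcomp Require Import all_boot all_algebra.
Set Implicit Arguments. Unset Strict Implicit. Unset Printing Implicit Defensive.
Import GRing.Theory.
Local Open Scope ring_scope.

(* Additive covariant functors from left R-modules to left S-modules.
   Morphisms are R-linear maps; the functor laws and additivity are
   stated pointwise (so they also give extensionality). *)
Record Functor (R S : pzRingType) := {
  Fobj :> lmodType R -> lmodType S;
  Fmap : forall A B : lmodType R, {linear A -> B} -> {linear Fobj A -> Fobj B};
  Fmap_id : forall (A : lmodType R) (f : {linear A -> A}),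
      (forall x, f x = x) -> forall y, Fmap f y = y;
  Fmap_comp : forall (A B C : lmodType R) (f : {linear A -> B})
      (g : {linear B -> C}) (h : {linear A -> C}),
      (forall x, h x = g (f x)) -> forall y, Fmap h y = Fmap g (Fmap f y);
  Fmap_add : forall (A B : lmodType R) (f g h : {linear A -> B}),
      (forall x, h x = f x + g x) -> forall y, Fmap h y = Fmap f y + Fmap g y
}.
Arguments Fmap {R S} f {A B} : rename.

Record directed_set := {
  dI :> Type;
  dle : dI -> dI -> Prop;
  dle_refl : forall a, dle a a;
  dle_trans : forall a b c, dle a b -> dle b c -> dle a c;
  dle_directed : forall a b, exists c, dle a c /\ dle b c;
  d_nonempty : inhabited dI
}.

Record dsystem (R : pzRingType) (I : directed_set) := {
  dobj :> I -> lmodType R;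
  dmap : forall a b : I, dle a b -> {linear dobj a -> dobj b};
  dmap_id : forall a (h : dle a a) x, dmap h x = x;
  dmap_comp : forall a b c (hab : dle a b) (hbc : dle b c) (hac : dle a c) x,
      dmap hac x = dmap hbc (dmap hab x)
}.
Arguments dmap {R I} d {a b} : rename.

Definition is_direct_limit (R : pzRingType) (I : directed_set)
  (obj : I -> lmodType R) (map : forall a b : I, dle a b -> obj a -> obj b)
  (L : lmodType R) (sigma : forall a, {linear obj a -> L}) : Prop :=
  (forall a b (h : dle a b) x, sigma b (map a b h x) = sigma a x) /\
  (forall (X : lmodType R) (tau : forall a, {linear obj a -> X}),
     (forall a b (h : dle a b) x, tau b (map a b h x) = tau a x) ->
     (exists u : {linear L -> X}, forall a x, u (sigma a x) = tau a x) /\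
     (forall u v : {linear L -> X},
        (forall a x, u (sigma a x) = tau a x) ->
        (forall a x, v (sigma a x) = tau a x) -> forall y, u y = v y)).

(* F is of type L-Sigma^*: the canonical map lim F(A^a) -> F(lim A^a) is an
   isomorphism, i.e. F carries direct limits to direct limits. *)
Definition type_LSigma (R S : pzRingType) (F : Functor R S) : Prop :=
  forall (I : directed_set) (D : dsystem R I) (L : lmodType R)
         (sigma : forall a, {linear D a -> L}),
    is_direct_limit (fun a b h => dmap D h) sigma ->
    is_direct_limit (fun a b h => Fmap F (dmap D h)) (fun a => Fmap F (sigma a)).

Definition projective (R : pzRingType) (P : lmodType R) : Prop :=
  forall (B C : lmodType R) (g : {linear B -> C}) (f : {linear P -> C}),
    (forall c, exists b, g b = c) ->
    exists h : {linear P -> B}, forall x, g (h x) = f x.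

Definition LSigma_projective (R S : pzRingType) (F : Functor R S) : Prop :=
  forall (I : directed_set) (D : dsystem R I) (L : lmodType R)
         (sigma : forall a, {linear D a -> L}),
    (forall a, projective (D a)) ->
    is_direct_limit (fun a b h => dmap D h) sigma ->
    is_direct_limit (fun a b h => Fmap F (dmap D h)) (fun a => Fmap F (sigma a)).

Definition short_exact (R : pzRingType) (A' A A'' : lmodType R)
  (f : {linear A' -> A}) (g : {linear A -> A''}) : Prop :=
  injective f /\ (forall c, exists b, g b = c) /\
  (forall x, g x = 0 <-> exists y, f y = x).

Definition exact_at (R : pzRingType) (A' A A'' : lmodType R)
  (f : {linear A' -> A}) (g : {linear A -> A''}) : Prop :=
  forall x, g x = 0 <-> exists y, f y = x.

Definition half_exact (R S : pzRingType) (T : Functor R S) : Prop :=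
  forall (A' A A'' : lmodType R) (f : {linear A' -> A}) (g : {linear A -> A''}),
    short_exact f g -> exact_at (Fmap T f) (Fmap T g).

Definition right_exact (R S : pzRingType) (T : Functor R S) : Prop :=
  forall (A' A A'' : lmodType R) (f : {linear A' -> A}) (g : {linear A -> A''}),
    short_exact f g ->
    exact_at (Fmap T f) (Fmap T g) /\ (forall z, exists y, Fmap T g y = z).

Record presentation (R : pzRingType) := {
  presP : lmodType R -> lmodType R;
  presM : lmodType R -> lmodType R;
  pres_i : forall A, {linear presM A -> presP A};
  pres_p : forall A, {linear presP A -> A};
  presP_proj : forall A, projective (presP A);
  pres_exact : forall A, short_exact (pres_i A) (pres_p A)
}.

(* S is the first left satellite S_1 T computed from the presentation pr:
   iota A identifies S A with Ker (T (M A) -> T (P A)), and S g is the map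
   induced by T (gM) for any lift (gP, gM) of g. *)
Definition first_left_satellite (R S1 : pzRingType) (T S : Functor R S1)
  (pr : presentation R) (iota : forall A, {linear S A -> T (presM pr A)}) : Prop :=
  (forall A, injective (iota A)) /\
  (forall A y, (exists s, iota A s = y) <-> Fmap T (pres_i pr A) y = 0) /\
  (forall (A' A : lmodType R) (g : {linear A' -> A})
          (gP : {linear presP pr A' -> presP pr A})
          (gM : {linear presM pr A' -> presM pr A}),
     (forall x, pres_p pr A (gP x) = g (pres_p pr A' x)) ->
     (forall x, pres_i pr A (gM x) = gP (pres_i pr A' x)) ->
     forall s, iota A (Fmap S g s) = Fmap T gM (iota A' s)).

(** Both parts are proved with the elementwise description of a direct limit of
   modules: a cocone is a direct limit iff every element of the limit comes from
   some stage and every element that vanishes in the limit already vanishes at a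
   later stage ([direct_limitP]).  Every module A has a functorial presentation
   0 -> K A -> F A -> A -> 0 by the free module F A on its underlying set, and F
   and K commute with direct limits.  Comparing the given projective presentation
   with this one identifies S_1T(A) naturally with Ker (T(K A) -> T(F A)), so (i)
   follows because direct limits commute with kernels.  For (ii), right
   exactness makes T(A) the cokernel of T(K A) -> T(F A); the F(A^a) are
   projective, so T commutes with their limit, and direct limits commute with
   cokernels once T(K A^a) -> T(K A) is known to be jointly onto, which is the
   surjectivity half of the same argument applied to the system K A^a. *)

From HB Require Import structures.
From mathcomp Require Import all_boot all_algebra.
From mathcomp Require Import boolp ring_quotient.
Set Implicit Arguments. Unset Strict Implicit. Unset Printing Implicit Defensive.
Import GRing.Theory Quotient.
Local Open Scope ring_scope.
Local Open Scope quotient_scope.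

Definition linear_of (R : pzRingType) (U V : lmodType R) (f : U -> V)
    (f_lin : linear f) : {linear U -> V} :=
  HB.pack f (GRing.isLinear.Build R U V *:%R f f_lin).

Record submodule (R : pzRingType) (V : lmodType R) := Submodule {
  submodule_prop :> V -> Prop;
  submodule0 : submodule_prop 0;
  submoduleD x y : submodule_prop x -> submodule_prop y -> submodule_prop (x + y);
  submoduleZ a x : submodule_prop x -> submodule_prop (a *: x) }.

Section SubmoduleQuotient.
Variables (R : pzRingType) (V : lmodType R) (S : submodule V).

Definition submodule_mem : {pred V} := fun x => `[< S x >].

Lemma submodule_memP x : reflect (S x) (x \in submodule_mem).
Proof. exact: asboolP. Qed.

Lemma submodule_mem_closed : submod_closed submodule_mem.
Proof.
split=> [|a x y /submodule_memP Sx /submodule_memP Sy]; apply/submodule_memP.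
  exact: submodule0.
by apply: submoduleD => //; apply: submoduleZ.
Qed.
HB.instance Definition _ :=
  GRing.isSubmodClosed.Build R V submodule_mem submodule_mem_closed.

Definition subm := {x : V | x \in submodule_mem}.
HB.instance Definition _ := [isSub for (@sval V _ : subm -> V)].
HB.instance Definition _ := [Choice of subm by <:].
HB.instance Definition _ := [SubChoice_isSubLmodule of subm by <:].

Lemma subm_valP (x : subm) : S (val x).
Proof. exact/submodule_memP/valP. Qed.

Definition subm_of (x : V) (Sx : S x) : subm := Sub x (introT (submodule_memP x) Sx).

Local Notation quotm := {quot submodule_mem}.

Definition quotm_scale (a : R) : quotm -> quotm := lift_op1 quotm ( *:%R a).

Lemma pi_scale a : {morph \pi_quotm : x / a *: x >-> quotm_scale a x}.
Proof.
move=> x; unlock quotm_scale; apply/eqP; rewrite piE equivE.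
by rewrite -scalerBr rpredZ // idealrBE reprK.
Qed.
Canonical pi_scale_morph a := PiMorph1 (pi_scale a).

Lemma quotm_scaleA a b q : quotm_scale a (quotm_scale b q) = quotm_scale (a * b) q.
Proof. by elim/quotW: q => x; rewrite !piE scalerA. Qed.

Lemma quotm_scale1 : left_id 1 quotm_scale.
Proof. by elim/quotW => x; rewrite !piE scale1r. Qed.

Lemma quotm_scaleDr : right_distributive quotm_scale +%R.
Proof. by move=> a; elim/quotW => x; elim/quotW => y; rewrite !piE scalerDr. Qed.

Lemma quotm_scaleDl q : {morph quotm_scale^~ q : a b / a + b}.
Proof. by move=> a b; elim/quotW: q => x; rewrite !piE scalerDl. Qed.

HB.instance Definition _ := GRing.Zmodule_isLmodule.Build R quotm
  quotm_scaleA quotm_scale1 quotm_scaleDr quotm_scaleDl.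

Lemma pi_quotm_linear : linear (\pi_quotm : V -> quotm).
Proof. by move=> a x y; rewrite !piE. Qed.
HB.instance Definition _ :=
  GRing.isLinear.Build R V quotm *:%R \pi_quotm pi_quotm_linear.

Lemma pi_quotm_eq0 x : \pi_quotm x = 0 <-> S x.
Proof.
rewrite -(linear0 \pi_quotm); split=> [/eqP|Sx].
  by rewrite piE equivE subr0 => /submodule_memP.
by apply/eqP; rewrite piE equivE subr0; apply/submodule_memP.
Qed.

End SubmoduleQuotient.

Notation quotm S := {quot submodule_mem S}.

Definition kernel (R : pzRingType) (U V : lmodType R) (f : {linear U -> V}) :
  submodule U.
Proof.
refine (@Submodule _ _ (fun x => f x = 0) _ _ _) => [|x y fx fy|a x fx].
- exact: linear0.
- by rewrite linearD /= fx fy addr0.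
- by rewrite linearZ /= fx scaler0.
Defined.

Section ProductModule.
Variables (R : pzRingType) (I : Type) (M : I -> lmodType R).

Definition prodm := forall i, M i.
HB.instance Definition _ := gen_eqMixin prodm.
HB.instance Definition _ := gen_choiceMixin prodm.

Definition prodm_zero : prodm := fun i => 0.
Definition prodm_opp (f : prodm) : prodm := fun i => - f i.
Definition prodm_add (f g : prodm) : prodm := fun i => f i + g i.
Definition prodm_scale (a : R) (f : prodm) : prodm := fun i => a *: f i.

Let pointwise (f g : prodm) : (forall i, f i = g i) -> f = g.
Proof. exact: functional_extensionality_dep. Qed.

Lemma prodm_addA : associative prodm_add.
Proof. by move=> f g h; apply: pointwise => i; apply: addrA. Qed.
Lemma prodm_addC : commutative prodm_add.
Proof. by move=> f g; apply: pointwise => i; apply: addrC. Qed.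
Lemma prodm_add0 : left_id prodm_zero prodm_add.
Proof. by move=> f; apply: pointwise => i; apply: add0r. Qed.
Lemma prodm_addN : left_inverse prodm_zero prodm_opp prodm_add.
Proof. by move=> f; apply: pointwise => i; apply: addNr. Qed.
HB.instance Definition _ :=
  GRing.isZmodule.Build prodm prodm_addA prodm_addC prodm_add0 prodm_addN.

Lemma prodm_scaleA a b f : prodm_scale a (prodm_scale b f) = prodm_scale (a * b) f.
Proof. by apply: pointwise => i; apply: scalerA. Qed.
Lemma prodm_scale1 : left_id 1 prodm_scale.
Proof. by move=> f; apply: pointwise => i; apply: scale1r. Qed.
Lemma prodm_scaleDr : right_distributive prodm_scale +%R.
Proof. by move=> a f g; apply: pointwise => i; apply: scalerDr. Qed.
Lemma prodm_scaleDl f : {morph prodm_scale^~ f : a b / a + b}.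
Proof. by move=> a b; apply: pointwise => i; apply: scalerDl. Qed.
HB.instance Definition _ := GRing.Zmodule_isLmodule.Build R prodm
  prodm_scaleA prodm_scale1 prodm_scaleDr prodm_scaleDl.

Lemma prodmD (f g : prodm) i : (f + g) i = f i + g i. Proof. by []. Qed.
Lemma prodmB (f g : prodm) i : (f - g) i = f i - g i. Proof. by []. Qed.
Lemma prodmZ a (f : prodm) i : (a *: f) i = a *: f i. Proof. by []. Qed.

End ProductModule.

(** * Direct limits *)

Section DirectLimit.
Variables (R : pzRingType) (I : directed_set) (D : dsystem R I).
Variables (L : lmodType R) (sigma : forall a, {linear D a -> L}).

Record elem_limit : Prop := ElemLimit {
  elem_cocone a b (h : dle a b) x : sigma b (dmap D h x) = sigma a x;
  elem_surj y : exists a x, sigma a x = y;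
  elem_ker a x : sigma a x = 0 -> exists b (h : dle a b), dmap D h x = 0 }.

Lemma elem_limit_eq : elem_limit -> forall a b x y, sigma a x = sigma b y ->
  exists c (hac : dle a c) (hbc : dle b c), dmap D hac x = dmap D hbc y.
Proof.
move=> [co _ ker] a b x y Exy; have [c [hac hbc]] := dle_directed a b.
have : sigma c (dmap D hac x - dmap D hbc y) = 0 by rewrite linearB /= !co Exy subrr.
case/ker=> d [hcd]; rewrite linearB /= => /subr0_eq Ed.
exists d, (dle_trans hac hcd), (dle_trans hbc hcd).
by rewrite (dmap_comp hac hcd) (dmap_comp hbc hcd).
Qed.

Lemma elem_limit_factor : elem_limit -> forall (X : Type) (g : forall a, D a -> X),
  (forall a b (h : dle a b) x, g b (dmap D h x) = g a x) ->
  exists f : L -> X, forall a x, f (sigma a x) = g a x.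
Proof.
move=> E X g gco.
have pre y : {p : {a : I & D a} | sigma (projT1 p) (projT2 p) = y}.
  by apply: cid; have [a [x <-]] := elem_surj E y; exists (existT _ a x).
exists (fun y => g _ (projT2 (sval (pre y)))) => a x.
case: (pre _) => -[b y] /= /(elem_limit_eq E) [c [hbc [hac Ec]]].
by rewrite -(gco _ _ hbc) Ec gco.
Qed.

Lemma elem_limit_direct :
  elem_limit -> is_direct_limit (fun a b h => dmap D h) sigma.
Proof.
move=> E; split=> [|X tau tauco]; first exact: elem_cocone E.
have [f fE] := elem_limit_factor E tauco.
split=> [|u v uE vE y]; last first.
  by have [a [x <-]] := elem_surj E y; rewrite uE vE.
have f_lin : linear f.
  move=> r y z; have [a [x <-]] := elem_surj E y; have [b [w <-]] := elem_surj E z.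
  have [c [hac hbc]] := dle_directed a b.
  rewrite -(elem_cocone E hac) -(elem_cocone E hbc) -linearP !fE linearP.
  by rewrite !tauco.
by exists (linear_of f_lin).
Qed.

Definition limit_image
    (sigma_cocone : forall a b (h : dle a b) x, sigma b (dmap D h x) = sigma a x) :
  submodule L.
Proof.
refine (@Submodule _ _ (fun y => exists a x, sigma a x = y) _ _ _).
- by case: (d_nonempty I) => a; exists a, 0; rewrite linear0.
- move=> _ _ [a [x <-]] [b [y <-]]; have [c [hac hbc]] := dle_directed a b.
  by exists c, (dmap D hac x + dmap D hbc y); rewrite linearD /= !sigma_cocone.
- by move=> r _ [a [x <-]]; exists a, (r *: x); rewrite linearZ.
Defined.

Definition eventually_zero : submodule (prodm D).
Proof.
refine (@Submodule _ _ (fun f : prodm D => exists c, forall b, dle c b -> f b = 0) _ _ _).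
- by case: (d_nonempty I) => a; exists a.
- move=> f g [c1 f0] [c2 g0]; have [c [h1 h2]] := dle_directed c1 c2.
  by exists c => b hb; rewrite prodmD f0 ?g0 ?addr0 //; apply: dle_trans hb.
- by move=> r f [c f0]; exists c => b hb; rewrite prodmZ f0 ?scaler0.
Defined.

Definition extend_by_zero b (x : D b) : prodm D := fun c =>
  if pselect (dle b c) is left h then dmap D h x else 0.

Lemma extend_by_zero_linear b : linear (@extend_by_zero b).
Proof.
move=> r x y; apply: functional_extensionality_dep => c.
rewrite prodmD prodmZ /extend_by_zero.
by case: pselect => h; rewrite ?linearP ?scaler0 ?addr0.
Qed.
HB.instance Definition _ (b : I) := GRing.isLinear.Build R (D b) (prodm D) *:%R
  (@extend_by_zero b) (@extend_by_zero_linear b).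

Lemma direct_limit_elem :
  is_direct_limit (fun a b h => dmap D h) sigma -> elem_limit.
Proof.
(* Test modules: L modulo the image of the cocone detects surjectivity; the
   product of the D c modulo eventually vanishing families detects vanishing at
   a later stage. *)
move=> [co univ]; split=> [a b h x|y|a x x0]; first exact: co.
  pose Q := quotm (limit_image co).
  have [_ uniq] := univ Q (fun a => \0) (fun _ _ _ _ => erefl).
  apply/(pi_quotm_eq0 (limit_image co)); apply: (uniq \pi_Q \0) => // b z.
  by apply/pi_quotm_eq0; exists b, z.
pose Q := quotm eventually_zero.
pose tau b : {linear D b -> Q} := \pi_Q \o @extend_by_zero b.
have tauco b c (h : dle b c) z : tau c (dmap D h z) = tau b z.
  apply/eqP; rewrite /tau /= -subr_eq0 -linearB; apply/eqP/pi_quotm_eq0.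
  exists c => d hcd; rewrite prodmB /extend_by_zero.
  case: (pselect (dle c d)) => [hcd'|[]//]; case: (pselect (dle b d)) => [hbd|[]].
    by rewrite -dmap_comp subrr.
  exact: dle_trans h hcd.
have [[u uE] _] := univ Q tau tauco.
have /pi_quotm_eq0 [c xc] : tau a x = 0 by rewrite -uE x0 linear0.
have [d [had hcd]] := dle_directed a c.
exists d, had; have := xc d hcd; rewrite /= /extend_by_zero.
by case: (pselect (dle a d)) => [had'|[]//]; rewrite (Prop_irrelevance had' had).
Qed.

Lemma direct_limitP :
  is_direct_limit (fun a b h => dmap D h) sigma <-> elem_limit.
Proof. by split; [apply: direct_limit_elem | apply: elem_limit_direct]. Qed.

End DirectLimit.

Section KernelLimit.
Variables (R : pzRingType) (I : directed_set) (X Y Z : dsystem R I).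
Variables (LX LY LZ : lmodType R) (sX : forall a, {linear X a -> LX}).
Variables (sY : forall a, {linear Y a -> LY}) (sZ : forall a, {linear Z a -> LZ}).
Variables (phi : forall a, {linear X a -> Y a}) (phiL : {linear LX -> LY}).
Variables (theta : forall a, {linear Z a -> X a}) (thetaL : {linear LZ -> LX}).
Hypothesis phi_map : forall a b (h : dle a b) x, phi b (dmap X h x) = dmap Y h (phi a x).
Hypothesis phi_lim : forall a x, phiL (sX a x) = sY a (phi a x).
Hypothesis theta_map :
  forall a b (h : dle a b) z, theta b (dmap Z h z) = dmap X h (theta a z).
Hypothesis theta_lim : forall a z, thetaL (sZ a z) = sX a (theta a z).
Hypothesis theta_inj : forall a, injective (theta a).
Hypothesis thetaL_inj : injective thetaL.
Hypothesis theta_onto_ker : forall a x, phi a x = 0 -> exists z, theta a z = x.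
Hypothesis phi_thetaL : forall z, phiL (thetaL z) = 0.

Lemma kernel_elem_limit : elem_limit sX -> elem_limit sY -> elem_limit sZ.
Proof.
move=> EX EY; split=> [a b h z|z|a z z0].
- by apply: thetaL_inj; rewrite !theta_lim theta_map (elem_cocone EX).
- have [a [x xz]] := elem_surj EX (thetaL z).
  have /(elem_ker EY) [b [h]] : sY a (phi a x) = 0 by rewrite -phi_lim xz.
  rewrite -phi_map => /theta_onto_ker [w wx]; exists b, w.
  by apply: thetaL_inj; rewrite theta_lim wx (elem_cocone EX).
- have /(elem_ker EX) [b [h]] : sX a (theta a z) = 0 by rewrite -theta_lim z0 linear0.
  by rewrite -theta_map -(linear0 (theta b)) => /theta_inj; exists b, h.
Qed.

End KernelLimit.

Section CokernelLimit.
Variables (R : pzRingType) (I : directed_set) (X Y Z : dsystem R I).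
Variables (LX LY LZ : lmodType R) (sX : forall a, {linear X a -> LX}).
Variables (sY : forall a, {linear Y a -> LY}) (sZ : forall a, {linear Z a -> LZ}).
Variables (phi : forall a, {linear X a -> Y a}) (phiL : {linear LX -> LY}).
Variables (psi : forall a, {linear Y a -> Z a}) (psiL : {linear LY -> LZ}).
Hypothesis phi_map : forall a b (h : dle a b) x, phi b (dmap X h x) = dmap Y h (phi a x).
Hypothesis phi_lim : forall a x, phiL (sX a x) = sY a (phi a x).
Hypothesis psi_map : forall a b (h : dle a b) y, psi b (dmap Y h y) = dmap Z h (psi a y).
Hypothesis psi_lim : forall a y, psiL (sY a y) = sZ a (psi a y).
Hypothesis psi_surj : forall a z, exists y, psi a y = z.
Hypothesis psi_phi : forall a x, psi a (phi a x) = 0.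
Hypothesis psiL_surj : forall z, exists y, psiL y = z.
Hypothesis psiL_ker : forall y, psiL y = 0 -> exists x, phiL x = y.

Lemma cokernel_limit_surj : elem_limit sY -> forall z, exists a w, sZ a w = z.
Proof.
move=> EY z; have [y <-] := psiL_surj z; have [a [w <-]] := elem_surj EY y.
by exists a, (psi a w); rewrite psi_lim.
Qed.

Lemma cokernel_elem_limit :
  (forall x, exists a w, sX a w = x) -> elem_limit sY -> elem_limit sZ.
Proof.
move=> sX_surj EY; split=> [a b h z|z|a z z0]; last 2 first.
- exact: cokernel_limit_surj.
- have [y yz] := psi_surj z.
  have /psiL_ker [x' xy] : psiL (sY a y) = 0 by rewrite psi_lim yz.
  have [c [x xx']] := sX_surj x'.
  have /(elem_limit_eq EY) [d [had [hcd]]] : sY a y = sY c (phi c x).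
    by rewrite -phi_lim xx' xy.
  rewrite -phi_map => yx; exists d, had.
  by rewrite -yz -psi_map yx psi_phi.
have [y <-] := psi_surj z.
by rewrite -psi_map -!psi_lim (elem_cocone EY).
Qed.

End CokernelLimit.

(** * Free modules and the canonical presentation *)

Section FreeModule.
Variables (R : pzRingType) (K : choiceType).

Definition finite_support : submodule (prodm (fun _ : K => R^o)).
Proof.
refine (@Submodule _ _
  (fun f : prodm _ => exists s : seq K, forall k, k \notin s -> f k = 0) _ _ _).
- by exists [::].
- move=> f g [s f0] [t g0]; exists (s ++ t) => k.
  by rewrite mem_cat negb_or => /andP[ks kt]; rewrite prodmD f0 ?g0 ?addr0.
- by move=> a f [s f0]; exists s => k ks; rewrite prodmZ f0 ?scaler0.
Defined.

Definition free := subm finite_support.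

Definition coef (f : free) (k : K) : R := val f k.

Lemma coefD f g k : coef (f + g) k = coef f k + coef g k. Proof. by []. Qed.
Lemma coefZ a f k : coef (a *: f) k = a * coef f k. Proof. by []. Qed.

Lemma free_eq (f g : free) : coef f =1 coef g -> f = g.
Proof. by move=> fg; apply: val_inj; apply: functional_extensionality_dep. Qed.

Definition support (f : free) : seq K :=
  undup (sval (cid (subm_valP f))).

Lemma support_uniq f : uniq (support f).
Proof. exact: undup_uniq. Qed.

Lemma coef_support f k : k \notin support f -> coef f k = 0.
Proof. by rewrite mem_undup; case: cid => s /= f0; apply: f0. Qed.

Definition fdelta (k : K) : free.
Proof.
refine (@subm_of _ _ finite_support (fun x => if x == k then 1 else 0) _).
by exists [:: k] => x; rewrite inE => /negbTE ->.
Defined.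

Lemma coef_fdelta k x : coef (fdelta k) x = (x == k)%:R.
Proof. by rewrite /coef /=; case: eqP. Qed.

Section Extension.
Variables (M : lmodType R) (g : K -> M).

Definition free_ext (f : free) : M := \sum_(k <- support f) coef f k *: g k.

(* [support f] is an arbitrary list chosen from the finiteness proof; any
   duplicate-free list outside of which f vanishes gives the same sum. *)
Lemma free_ext_cover f s : uniq s -> (forall k, k \notin s -> coef f k = 0) ->
  free_ext f = \sum_(k <- s) coef f k *: g k.
Proof.
move=> s_uniq s0.
have nz_only t : \sum_(k <- t) coef f k *: g k =
    \sum_(k <- [seq k <- t | coef f k != 0]) coef f k *: g k.
  rewrite big_filter [RHS]big_mkcond; apply: eq_bigr => k _.
  by case: eqP => // ->; rewrite scale0r.
rewrite /free_ext (nz_only (support f)) (nz_only s).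
apply/perm_big/uniq_perm; rewrite ?filter_uniq //.
  exact: support_uniq.
move=> k; rewrite !mem_filter; case: eqP => //= /eqP nz.
apply/idP/idP => _; apply: contraT.
  by move=> /s0 /eqP; rewrite (negbTE nz).
by move=> /coef_support /eqP; rewrite (negbTE nz).
Qed.

Lemma free_ext_linear : linear free_ext.
Proof.
move=> a f f'; pose s := undup (support f ++ support f').
have s_uniq : uniq s by apply: undup_uniq.
have f0 k : k \notin s -> coef f k = 0.
  by rewrite mem_undup mem_cat negb_or => /andP[/coef_support].
have f'0 k : k \notin s -> coef f' k = 0.
  by rewrite mem_undup mem_cat negb_or => /andP[_ /coef_support].
rewrite (free_ext_cover s_uniq f0) (free_ext_cover s_uniq f'0).
rewrite (free_ext_cover s_uniq) => [|k ks]; last first.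
  by rewrite coefD coefZ f0 ?f'0 ?mulr0 ?addr0.
rewrite scaler_sumr -big_split; apply: eq_bigr => k _.
by rewrite coefD coefZ scalerDl scalerA.
Qed.
HB.instance Definition _ :=
  GRing.isLinear.Build R free M *:%R free_ext free_ext_linear.

Lemma free_ext_delta k : free_ext (fdelta k) = g k.
Proof.
rewrite (@free_ext_cover _ [:: k]) // ?big_seq1 ?coef_fdelta ?eqxx ?scale1r //.
by move=> x; rewrite coef_fdelta inE => /negbTE ->.
Qed.

End Extension.

Lemma free_ext_fdelta f : free_ext fdelta f = f.
Proof.
apply: free_eq => x; pose s := undup (x :: support f).
rewrite (@free_ext_cover _ _ _ s (undup_uniq _)) => [|k]; last first.
  by rewrite mem_undup inE negb_or => /andP[_ /coef_support].
rewrite (big_morph (coef^~ x) (fun f g => coefD f g x) (erefl : coef 0 x = 0)) /=.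
rewrite (bigD1_seq x) ?mem_undup ?mem_head ?undup_uniq //= coefZ coef_fdelta eqxx mulr1.
by rewrite big1 ?addr0 // => k kx; rewrite coefZ coef_fdelta eq_sym (negbTE kx) mulr0.
Qed.

Lemma free_linear_eq (M : lmodType R) (u v : {linear free -> M}) :
  (forall k, u (fdelta k) = v (fdelta k)) -> u =1 v.
Proof.
move=> uv f; rewrite -[f]free_ext_fdelta /free_ext !linear_sum.
by apply: eq_bigr => k _; rewrite !linearZ uv.
Qed.

Lemma free_projective : projective free.
Proof.
move=> B C p f p_surj.
have pre k : {b : B | p b = f (fdelta k)} by apply: cid; apply: p_surj.
exists (free_ext (fun k => sval (pre k))).
apply: (free_linear_eq (u := p \o free_ext _)) => k /=.
by rewrite free_ext_delta; case: pre.
Qed.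

End FreeModule.

Arguments fdelta {R K} k.

Section CanonicalPresentation.
Variable R : pzRingType.
Implicit Types A B C : lmodType R.

Definition free_map A B (f : A -> B) : {linear free R A -> free R B} :=
  free_ext (fun x => fdelta (f x)).

Lemma free_map_delta A B (f : A -> B) x : free_map f (fdelta x) = fdelta (f x).
Proof. exact: free_ext_delta. Qed.

Lemma free_map_eq A B (f g : A -> B) : f =1 g -> free_map f =1 free_map g.
Proof. by move=> /funext ->. Qed.

Lemma free_map_id A p : free_map (@idfun A) p = p.
Proof.
by apply: (free_linear_eq (u := free_map idfun) (v := idfun)) => x; apply: free_map_delta.
Qed.

Lemma free_map_comp A B C (f : A -> B) (g : B -> C) p :
  free_map (g \o f) p = free_map g (free_map f p).
Proof.
apply: (free_linear_eq (u := free_map (g \o f)) (v := free_map g \o free_map f)) => x.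
by rewrite /= !free_map_delta.
Qed.

Definition counit A : {linear free R A -> A} := free_ext idfun.

Lemma counit_delta A (x : A) : counit A (fdelta x) = x.
Proof. exact: free_ext_delta. Qed.

Lemma counit_natural A B (f : {linear A -> B}) p :
  counit B (free_map f p) = f (counit A p).
Proof.
apply: (free_linear_eq (u := counit B \o free_map f) (v := f \o counit A)) => x.
by rewrite /= free_map_delta !counit_delta.
Qed.

Definition syzygy A := subm (kernel (counit A)).

Definition syzygy_incl A : {linear syzygy A -> free R A} := val.

Lemma free_map_syzygy A B (f : {linear A -> B}) (k : syzygy A) :
  kernel (counit B) (free_map f (val k)).
Proof. by rewrite /= counit_natural (subm_valP k) linear0. Qed.

Definition syzygy_map A B (f : {linear A -> B}) (k : syzygy A) : syzygy B :=
  subm_of (free_map_syzygy f k).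

Lemma syzygy_incl_map A B (f : {linear A -> B}) k :
  syzygy_incl B (syzygy_map f k) = free_map f (syzygy_incl A k).
Proof. by []. Qed.

Lemma syzygy_map_linear A B (f : {linear A -> B}) : linear (syzygy_map f).
Proof. by move=> a k k'; apply: val_inj; rewrite /= !linearP. Qed.
HB.instance Definition _ A B (f : {linear A -> B}) :=
  GRing.isLinear.Build R (syzygy A) (syzygy B) *:%R (syzygy_map f)
    (@syzygy_map_linear A B f).

Lemma canonical_exact A : short_exact (syzygy_incl A) (counit A).
Proof.
split; [exact: val_inj | split=> [x|p]]; first by exists (fdelta x); apply: counit_delta.
split=> [p0|[k <-]]; last exact: (subm_valP k).
by exists (subm_of (S := kernel (counit A)) p0).
Qed.

End CanonicalPresentation.

Section Systems.
Variables (R : pzRingType) (I : directed_set) (D : dsystem R I).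

Definition free_system : dsystem R I.
Proof.
refine {| dobj a := free R (D a); dmap a b h := free_map (dmap D h) |}.
- by move=> a h p; rewrite (free_map_eq (dmap_id h)) free_map_id.
- by move=> a b c hab hbc hac p; rewrite -free_map_comp; apply/free_map_eq/dmap_comp.
Defined.

Definition syzygy_system : dsystem R I.
Proof.
refine {| dobj a := syzygy (D a); dmap a b h := syzygy_map (dmap D h) |}.
- by move=> a h k; apply: val_inj; rewrite /= (free_map_eq (dmap_id h)) free_map_id.
- move=> a b c hab hbc hac k; apply: val_inj; rewrite /= -free_map_comp.
  exact/free_map_eq/dmap_comp.
Defined.

Variables (L : lmodType R) (sigma : forall a, {linear D a -> L}).

Lemma free_limit : elem_limit sigma ->
  is_direct_limit (fun a b h => dmap free_system h) (fun a => free_map (sigma a)).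
Proof.
move=> E; split=> [a b h p|X tau tauco].
  by rewrite /= -free_map_comp; apply: free_map_eq => x; apply: (elem_cocone E).
have [g gE] := elem_limit_factor E (g := fun a x => tau a (fdelta x))
  (fun a b h x => etrans (f_equal (tau b) (esym (free_map_delta _ _))) (tauco a b h _)).
split=> [|u v uE vE].
  exists (free_ext g) => a; apply: (free_linear_eq (u := free_ext g \o _)) => x.
  by rewrite /= free_map_delta free_ext_delta gE.
apply: free_linear_eq => y; have [a [x <-]] := elem_surj E y.
by rewrite -free_map_delta uE vE.
Qed.

Lemma syzygy_limit : elem_limit sigma ->
  elem_limit (D := syzygy_system) (fun a => syzygy_map (sigma a)).
Proof.
move=> E; apply: (@kernel_elem_limit _ _ free_system D syzygy_system _ _ _
  (fun a => free_map (sigma a)) sigma _ (fun a => counit (D a)) (counit L)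
  (fun a => syzygy_incl (D a)) (syzygy_incl L)) => //.
- by move=> a b h p; apply: counit_natural.
- by move=> a p; apply: counit_natural.
- by move=> a; apply: val_inj.
- exact: val_inj.
- by move=> a p p0; exists (subm_of (S := kernel (counit (D a))) p0).
- by move=> k; apply: (subm_valP k).
- by apply/direct_limitP/free_limit.
Qed.

End Systems.

Definition functor_system (R S : pzRingType) (T : Functor R S) (I : directed_set)
    (D : dsystem R I) : dsystem S I.
Proof.
refine {| dobj a := T (D a); dmap a b h := Fmap T (dmap D h) |}.
- by move=> a h; apply: Fmap_id; apply: dmap_id.
- by move=> a b c hab hbc hac; apply: Fmap_comp; apply: dmap_comp.
Defined.

Section FunctorLemmas.
Variables (R S : pzRingType) (T : Functor R S).
Implicit Types A B C : lmodType R.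

Lemma Fmap_compE A B C (f : {linear A -> B}) (g : {linear B -> C}) y :
  Fmap T (g \o f) y = Fmap T g (Fmap T f y).
Proof. exact: Fmap_comp. Qed.

Lemma Fmap_eq A B (f g : {linear A -> B}) : f =1 g -> Fmap T f =1 Fmap T g.
Proof.
move=> fg y; rewrite (Fmap_comp (f := idfun) (g := g) (h := f)) //.
by rewrite (Fmap_id (f := idfun)).
Qed.

Lemma Fmap_square A B B' C (f : {linear A -> B}) (g : {linear B -> C})
    (f' : {linear A -> B'}) (g' : {linear B' -> C}) :
  (forall x, g (f x) = g' (f' x)) ->
  forall y, Fmap T g (Fmap T f y) = Fmap T g' (Fmap T f' y).
Proof. by move=> fg y; rewrite -!Fmap_compE; apply: Fmap_eq. Qed.

Lemma Fmap_null A B (f : {linear A -> B}) :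
  (forall x, f x = 0) -> forall y, Fmap T f y = 0.
Proof.
move=> f0 y; apply: (@addrI _ (Fmap T f y)); rewrite addr0.
by rewrite -(Fmap_add (f := f) (g := f) (h := f)) // => x; rewrite f0 addr0.
Qed.

End FunctorLemmas.

Section Lifts.
Variable R : pzRingType.
Implicit Types A M P U : lmodType R.

Definition lifts M P A M' P' A' (i : {linear M -> P}) (p : {linear P -> A})
    (i' : {linear M' -> P'}) (p' : {linear P' -> A'}) (g : A -> A')
    (gP : {linear P -> P'}) (gM : {linear M -> M'}) : Prop :=
  (forall x, p' (gP x) = g (p x)) /\ (forall m, i' (gM m) = gP (i m)).

Lemma lifts_id M P A (i : {linear M -> P}) (p : {linear P -> A}) :
  lifts i p i p id idfun idfun.
Proof. by []. Qed.

Lemma lifts_comp M1 P1 A1 M2 P2 A2 M3 P3 A3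
    (i1 : {linear M1 -> P1}) (p1 : {linear P1 -> A1})
    (i2 : {linear M2 -> P2}) (p2 : {linear P2 -> A2})
    (i3 : {linear M3 -> P3}) (p3 : {linear P3 -> A3})
    (g1 : A1 -> A2) (g2 : A2 -> A3) f1P f1M f2P f2M :
  lifts i1 p1 i2 p2 g1 f1P f1M -> lifts i2 p2 i3 p3 g2 f2P f2M ->
  lifts i1 p1 i3 p3 (g2 \o g1) (f2P \o f1P) (f2M \o f1M).
Proof. by move=> [p1P i1M] [p2P i2M]; split=> x /=; rewrite ?p2P ?p1P ?i2M ?i1M. Qed.

Lemma factor_through_injective U M' P' (i' : {linear M' -> P'}) (f : {linear U -> P'}) :
  injective i' -> (forall u, exists m, i' m = f u) ->
  exists s : {linear U -> M'}, forall u, i' (s u) = f u.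
Proof.
move=> i'_inj f_im.
have pre u : {m | i' m = f u} by apply: cid; apply: f_im.
have preE u : i' (sval (pre u)) = f u := svalP (pre u).
have s_lin : linear (fun u => sval (pre u)).
  by move=> a u v; apply: i'_inj; rewrite [RHS]linearP !preE linearP.
by exists (linear_of s_lin).
Qed.

Lemma lift_exists M P A M' P' A' (i : {linear M -> P}) (p : {linear P -> A})
    (i' : {linear M' -> P'}) (p' : {linear P' -> A'}) (g : {linear A -> A'}) :
  projective P -> short_exact i p -> short_exact i' p' ->
  exists gPM : {linear P -> P'} * {linear M -> M'}, lifts i p i' p' g gPM.1 gPM.2.
Proof.
move=> P_proj [_ [_ ip]] [i'_inj [p'_surj i'p']].
have [gP gPp] := P_proj _ _ p' (g \o p) p'_surj.
have [|gM gMi] := factor_through_injective (f := gP \o i) i'_inj.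
  move=> m; apply/i'p'; rewrite /= gPp /=.
  have /ip -> : exists m', i m' = i m by exists m.
  exact: linear0.
by exists (gP, gM).
Qed.

End Lifts.

Section Homotopy.
Variables (R S : pzRingType) (T : Functor R S).
Implicit Types A M P : lmodType R.

Lemma Fmap_lifts_eq M P A M' P' A' (i : {linear M -> P}) (p : {linear P -> A})
    (i' : {linear M' -> P'}) (p' : {linear P' -> A'}) (g : A -> A') gP gM gP' gM' :
  short_exact i' p' -> lifts i p i' p' g gP gM -> lifts i p i' p' g gP' gM' ->
  forall y, Fmap T i y = 0 -> Fmap T gM y = Fmap T gM' y.
Proof.
move=> [i'_inj [_ i'p']] [pP iM] [pP' iM'] y y0.
(* gM - gM' factors through i. *)
have [|s sE] := factor_through_injective (f := gP \- gP') i'_inj.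
  by move=> x; apply/i'p'; rewrite /= linearB /= pP pP' subrr.
have gME m : gM m = gM' m + s (i m).
  by apply: i'_inj; rewrite linearD /= sE /= iM iM' addrC subrK.
by rewrite (Fmap_add (f := gM') (g := s \o i) (h := gM) gME) Fmap_compE y0 linear0 addr0.
Qed.

End Homotopy.

(** * The first left satellite and direct limits *)

Lemma canonical_lifts (R : pzRingType) (A B : lmodType R) (g : {linear A -> B}) :
  lifts (syzygy_incl A) (counit A) (syzygy_incl B) (counit B) g
    (free_map g) (syzygy_map g).
Proof. by split=> x; rewrite ?counit_natural ?syzygy_incl_map. Qed.

Section Comparison.
Variables (R R1 : pzRingType) (T S1T : Functor R R1) (pr : presentation R).
Variable iota : forall A, {linear S1T A -> T (presM pr A)}.
Hypothesis sat : @first_left_satellite _ _ T S1T pr iota.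
Implicit Types A B : lmodType R.

Let iota_inj A : injective (iota A) := sat.1 A.
Let iota_ker A y : (exists s, iota A s = y) <-> Fmap T (pres_i pr A) y = 0 := sat.2.1 A y.

Lemma lift_to_canonical A : {gPM : {linear presP pr A -> free R A} *
    {linear presM pr A -> syzygy A} |
  lifts (pres_i pr A) (pres_p pr A) (syzygy_incl A) (counit A) idfun gPM.1 gPM.2}.
Proof. exact/cid/lift_exists/canonical_exact/pres_exact/presP_proj. Qed.

Definition comparison A : {linear S1T A -> T (syzygy A)} :=
  Fmap T (sval (lift_to_canonical A)).2 \o iota A.

Let to_free A := (sval (lift_to_canonical A)).1.
Let to_canonical_lifts A := svalP (lift_to_canonical A).
Let lift_from_canonical A :=
  lift_exists idfun (@free_projective R A) (canonical_exact A) (pres_exact pr A).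

Lemma comparison_ker A s : Fmap T (syzygy_incl A) (comparison A s) = 0.
Proof.
rewrite /= (Fmap_square (f' := pres_i pr A) (g' := to_free A)).
  have /iota_ker -> : exists s', iota A s' = iota A s by exists s.
  exact: linear0.
by move=> m; apply: (to_canonical_lifts A).2.
Qed.

Lemma comparison_retract A dP dM :
    lifts (syzygy_incl A) (counit A) (pres_i pr A) (pres_p pr A) idfun dP dM ->
  forall s, Fmap T dM (comparison A s) = iota A s.
Proof.
move=> d s; rewrite /= -Fmap_compE.
rewrite (Fmap_lifts_eq (pres_exact pr A) (lifts_comp (to_canonical_lifts A) d)
  (lifts_id _ _)).
  exact: Fmap_id.
by apply/iota_ker; exists s.
Qed.

Lemma comparison_inj A : injective (comparison A).
Proof.
have [[dP dM] d] := lift_from_canonical A.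
by move=> s s' /(congr1 (Fmap T dM)); rewrite !(comparison_retract d) => /iota_inj.
Qed.

Lemma comparison_onto A k :
  Fmap T (syzygy_incl A) k = 0 -> exists s, comparison A s = k.
Proof.
move=> k0.
have [[dP dM] d] := lift_from_canonical A.
have [|s sk] := (iota_ker (Fmap T dM k)).2.
  rewrite (Fmap_square (f' := syzygy_incl A) (g' := dP)) ?k0 ?linear0 //.
  by move=> m; apply: d.2.
exists s; rewrite /= sk -Fmap_compE.
rewrite (Fmap_lifts_eq (canonical_exact A) (lifts_comp d (to_canonical_lifts A))
  (lifts_id _ _)) //.
exact: Fmap_id.
Qed.

Lemma comparison_natural A B (g : {linear A -> B}) s :
  comparison B (Fmap S1T g s) = Fmap T (syzygy_map g) (comparison A s).
Proof.
have [[gP gM] [gPp gMi]] :=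
  lift_exists g (@presP_proj _ pr A) (pres_exact pr A) (pres_exact pr B).
rewrite /= (sat.2.2 _ _ g gP gM gPp gMi) -!Fmap_compE.
apply: (Fmap_lifts_eq (canonical_exact B)
  (lifts_comp (conj gPp gMi) (to_canonical_lifts B))
  (lifts_comp (to_canonical_lifts A) (canonical_lifts g))).
by apply/iota_ker; exists s.
Qed.

End Comparison.

Lemma LSigma_elem_limit (R R1 : pzRingType) (T : Functor R R1) (I : directed_set)
    (D : dsystem R I) (L : lmodType R) (sigma : forall a, {linear D a -> L}) :
  type_LSigma T -> elem_limit sigma ->
  elem_limit (D := functor_system T D) (fun a => Fmap T (sigma a)).
Proof. by move=> TL E; apply/direct_limitP/TL/elem_limit_direct. Qed.

Lemma satellite_LSigma (R R1 : pzRingType) (T S1T : Functor R R1) (pr : presentation R)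
    (iota : forall A, {linear S1T A -> T (presM pr A)}) :
  @first_left_satellite _ _ T S1T pr iota -> type_LSigma T -> type_LSigma S1T.
Proof.
move=> sat TL I D L sigma /direct_limitP E.
apply/(direct_limitP (D := functor_system S1T D)).
apply: (kernel_elem_limit (X := functor_system T (syzygy_system D))
  (Y := functor_system T (free_system D)) (Z := functor_system S1T D)
  (phi := fun a => Fmap T (syzygy_incl (D a))) (phiL := Fmap T (syzygy_incl L))
  (theta := fun a => comparison iota (D a)) (thetaL := comparison iota L)).
- by move=> a b h; apply: Fmap_square => k; apply: syzygy_incl_map.
- by move=> a; apply: Fmap_square => k; apply: syzygy_incl_map.
- by move=> a b h; apply: comparison_natural.
- by move=> a; apply: comparison_natural.
- by move=> a; apply: comparison_inj.
- exact: comparison_inj.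
- by move=> a; apply: comparison_onto.
- exact: comparison_ker.
- exact/LSigma_elem_limit/syzygy_limit.
- exact/LSigma_elem_limit/direct_limitP/free_limit.
Qed.

Section RightExact.
Variables (R R1 : pzRingType) (T : Functor R R1).
Hypotheses (T_right_exact : right_exact T) (T_LSigma_proj : LSigma_projective T).

Lemma free_functor_limit (I : directed_set) (D : dsystem R I) (L : lmodType R)
    (sigma : forall a, {linear D a -> L}) :
  elem_limit sigma ->
  elem_limit (D := functor_system T (free_system D))
    (fun a => Fmap T (free_map (sigma a))).
Proof.
move=> E; apply/direct_limitP/T_LSigma_proj; last exact/free_limit.
by move=> a; apply: free_projective.
Qed.

Lemma right_exact_limit_surj (I : directed_set) (D : dsystem R I) (L : lmodType R)
    (sigma : forall a, {linear D a -> L}) :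
  elem_limit sigma -> forall y : T L, exists a x, Fmap T (sigma a) x = y.
Proof.
move=> E; apply: (cokernel_limit_surj (Y := functor_system T (free_system D))
  (Z := functor_system T D) (psi := fun a => Fmap T (counit (D a)))
  (psiL := Fmap T (counit L))).
- by move=> a; apply: Fmap_square => p; apply: counit_natural.
- exact: (T_right_exact (canonical_exact L)).2.
- exact: free_functor_limit.
Qed.

Lemma right_exact_LSigma : type_LSigma T.
Proof.
move=> I D L sigma /direct_limitP E.
apply/(direct_limitP (D := functor_system T D)).
apply: (cokernel_elem_limit (X := functor_system T (syzygy_system D))
  (Y := functor_system T (free_system D)) (Z := functor_system T D)
  (phi := fun a => Fmap T (syzygy_incl (D a))) (phiL := Fmap T (syzygy_incl L))
  (psi := fun a => Fmap T (counit (D a))) (psiL := Fmap T (counit L))).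
- by move=> a b h; apply: Fmap_square => k; apply: syzygy_incl_map.
- by move=> a; apply: Fmap_square => k; apply: syzygy_incl_map.
- by move=> a b h; apply: Fmap_square => p; apply: counit_natural.
- by move=> a; apply: Fmap_square => p; apply: counit_natural.
- by move=> a; apply: (T_right_exact (canonical_exact (D a))).2.
- move=> a x; rewrite -Fmap_compE; apply: Fmap_null => k.
  exact: (subm_valP k).
- exact: (T_right_exact (canonical_exact L)).2.
- by move=> y /(T_right_exact (canonical_exact L)).1.
- exact/right_exact_limit_surj/syzygy_limit.
- exact: free_functor_limit.
Qed.

End RightExact.

Theorem theorem2 (Lam Lam1 : pzRingType) (T S1T : Functor Lam Lam1)
  (pr : presentation Lam) (iota : forall A, {linear S1T A -> T (presM pr A)}) :
  @first_left_satellite _ _ T S1T pr iota ->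
  (half_exact T -> type_LSigma T -> type_LSigma S1T) /\
  (right_exact T -> type_LSigma S1T -> LSigma_projective T -> type_LSigma T).
Proof.
move=> sat; split=> [_ | T_right_exact _ T_LSigma_proj].
  exact: satellite_LSigma sat.
exact: right_exact_LSigma T_right_exact T_LSigma_proj.
Qed.
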